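(* Let $\mathcal{H}=\bigotimes_{i=1}^m\mathcal{H}_i$ and let $S$ be an unextendible product basis of $\mathcal{H}$. Then $S$ is not completable even in a locally extended Hilbert space: for no choice of finite-dimensional spaces $\mathcal{H}_i'$ does there exist a set of pairwise orthogonal product states of $\mathcal{H}'=\bigotimes_{i=1}^m(\mathcal{H}_i\oplus\mathcal{H}_i')$, orthogonal to all elements of $S$, which together with $S$ forms an orthogonal basis of $\mathcal{H}'$.
   Context: A product state in a multipartite space $\bigotimes_i \mathcal{K}_i$ is a vector $\phi_1\otimes\cdots\otimes\phi_m$ with nonzero $\phi_i\in\mathcal{K}_i$. An (incomplete orthogonal) product basis is a set $S$ of pairwise orthogonal product states spanning a proper subspace $\mathcal{H}_S$ of $\mathcal{H}$; it is unextendible if $\mathcal{H}_S^\perp$ contains no product state. Elements of $\mathcal{H}$ are regarded as elements of $\mathcal{H}'$ via the natural inclusions $\mathcal{H}_i\subseteq\mathcal{H}_i\oplus\mathcal{H}_i'$. *)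

(* Complex scalars are modelled as R[i] (real_closed.complex)
   over an arbitrary R : realType, i.e. the complex numbers built on the reals. *)
From HB Require Import structures.
From mathcomp Require Import all_boot all_order all_algebra.
From mathcomp Require Import complex.
From mathcomp Require Import reals.
Set Implicit Arguments. Unset Strict Implicit. Unset Printing Implicit Defensive.
Import Order.TTheory GRing.Theory Num.Theory.
Local Open Scope ring_scope.

Section Multipartite.
Variable C : numClosedFieldType.
Variable m : nat.

(* Basis labels of H = (x)_{i<m} H_i with dim H_i = d i :
   a tuple (x_i)_i with x_i : 'I_(d i). *)
Definition idx (d : 'I_m -> nat) := {dffun forall i : 'I_m, 'I_(d i)}.

(* vectors of H, in coordinates w.r.t. the product of the standard bases *)
Definition vec (d : 'I_m -> nat) := {ffun idx d -> C}.

Definition inner d (u v : vec d) : C := \sum_(x : idx d) (u x)^* * v x.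

Definition orth d (u v : vec d) : Prop := inner u v = 0.

Definition product_state d (v : vec d) : Prop :=
  exists phi : forall i : 'I_m, 'I_(d i) -> C,
    (forall i, exists k, phi i k != 0) /\
    (forall x : idx d, v x = \prod_(i < m) phi i (x i)).

Definition in_span d (B : seq (vec d)) (v : vec d) : Prop :=
  exists c : nat -> C,
    forall x : idx d, v x = \sum_(k < size B) c k * (B`_k) x.

Definition pairwise_orth d (B : seq (vec d)) : Prop :=
  uniq B /\ forall j k : nat, (j < size B)%N -> (k < size B)%N -> j != k ->
    orth B`_j B`_k.

Definition product_basis d (S : seq (vec d)) : Prop :=
  pairwise_orth S /\ (forall s, s \in S -> product_state s) /\
  exists v : vec d, ~ in_span S v.

Definition UPB d (S : seq (vec d)) : Prop :=
  product_basis S /\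
  forall v : vec d, product_state v -> ~ (forall s, s \in S -> orth s v).

Definition orth_basis d (B : seq (vec d)) : Prop :=
  pairwise_orth B /\ (forall b, b \in B -> b != 0) /\
  forall v : vec d, in_span B v.

(* local extension: H_i  ⊆  H_i ⊕ H_i', dim H_i' = e i *)
Definition ext_dim (d e : 'I_m -> nat) : 'I_m -> nat := fun i => (d i + e i)%N.

(* natural inclusion (x)_i H_i  ->  (x)_i (H_i ⊕ H_i'),
   induced by the inclusions lshift : 'I_(d i) -> 'I_(d i + e i) *)
Definition embed (d e : 'I_m -> nat) (v : vec d) : vec (ext_dim d e) :=
  [ffun y : idx (ext_dim d e) =>
     \sum_(x : idx d | [forall i, lshift (e i) (x i) == y i]) v x].

End Multipartite.

(* Restricting a vector of the extended space to the coordinates of the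
   original space is left inverse to the inclusion and adjoint to it for the
   inner product. A product state orthogonal to the inclusion of S therefore
   restricts either to zero (one of its factors vanishes on the old
   coordinates) or to a product state of the original space orthogonal to S,
   which unextendibility forbids. So all added states restrict to zero, and
   restricting an expansion of an arbitrary vector in the completed basis
   expresses it in the span of S, contradicting that S spans a proper
   subspace. *)
From HB Require Import structures.
From mathcomp Require Import all_boot all_order all_algebra.
From mathcomp Require Import complex.
From mathcomp Require Import reals.
Set Implicit Arguments. Unset Strict Implicit. Unset Printing Implicit Defensive.
Import Order.TTheory GRing.Theory Num.Theory.
Local Open Scope ring_scope.

Section InSpan.
Variables (C : numClosedFieldType) (m : nat) (d : 'I_m -> nat).

Lemma in_span_cat0 (S T : seq (vec C d)) (v : vec C d) :
  (forall t, t \in T -> t = 0) -> in_span (S ++ T) v -> in_span S v.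
Proof.
move=> T0 [c Hc]; exists c => x; rewrite Hc size_cat big_split_ord /=.
rewrite [X in _ + X]big1 ?addr0 => [|k _].
  by apply: eq_bigr => k _; rewrite nth_cat ltn_ord.
rewrite nth_cat [(_ < _)%N]ltnNge leq_addr addKn.
by rewrite (T0 _ (mem_nth 0 (ltn_ord k))) ffunE mulr0.
Qed.

End InSpan.

Section Restriction.
Variables (C : numClosedFieldType) (m : nat) (d e : 'I_m -> nat).

Definition lift_idx (x : idx d) : idx (ext_dim d e) :=
  [ffun i => lshift (e i) (x i)].

Definition restrict (t : vec C (ext_dim d e)) : vec C d :=
  [ffun x => t (lift_idx x)].

Lemma lift_idx_inj : injective lift_idx.
Proof.
move=> x y /ffunP Exy; apply/ffunP => i.
by have := Exy i; rewrite !ffunE => /lshift_inj.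
Qed.

Lemma forall_lshift_eq (x : idx d) (y : idx (ext_dim d e)) :
  [forall i, lshift (e i) (x i) == y i] = (y == lift_idx x).
Proof.
apply/forallP/eqP => [Ey | -> i]; last by rewrite ffunE.
by apply/ffunP => i; rewrite ffunE; apply/esym/eqP/Ey.
Qed.

Lemma embed_lift_idx (v : vec C d) (x : idx d) : embed e v (lift_idx x) = v x.
Proof.
rewrite ffunE (eq_bigl (pred1 x)) ?big_pred1_eq // => y /=.
by rewrite forall_lshift_eq (inj_eq lift_idx_inj).
Qed.

Lemma embedK : cancel (@embed C m d e) restrict.
Proof. by move=> v; apply/ffunP => x; rewrite ffunE embed_lift_idx. Qed.

Lemma inner_embed (s : vec C d) (t : vec C (ext_dim d e)) :
  inner (embed e s) t = inner s (restrict t).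
Proof.
rewrite /inner; under eq_bigr do rewrite ffunE rmorph_sum big_distrl big_mkcond /=.
rewrite exchange_big /=; apply: eq_bigr => x _.
rewrite (bigD1 (lift_idx x)) //= forall_lshift_eq eqxx ffunE.
by rewrite big1 ?addr0 // => y /negPf nxy; rewrite forall_lshift_eq nxy.
Qed.

Lemma restrict_in_span (B : seq (vec C (ext_dim d e))) t :
  in_span B t -> in_span (map restrict B) (restrict t).
Proof.
move=> [c Hc]; exists c => x; rewrite ffunE Hc size_map.
by apply: eq_bigr => k _; rewrite (nth_map 0) // ffunE.
Qed.

Lemma restrict_product_state (t : vec C (ext_dim d e)) :
  product_state t -> restrict t = 0 \/ product_state (restrict t).
Proof.
move=> [phi [phi_nz phiE]].
have [old_nz | /forallPn[i /existsPn old_0]] :=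
  boolP [forall i, [exists k, phi i (lshift (e i) k) != 0]].
  right; exists (fun i k => phi i (lshift (e i) k)); split.
    by move=> i; apply/existsP; exact: forallP old_nz i.
  by move=> x; rewrite ffunE phiE; apply: eq_bigr => i _; rewrite ffunE.
left; apply/ffunP => x; rewrite !ffunE phiE (bigD1 i) //= ffunE.
by rewrite (eqP (negPn (old_0 (x i)))) mul0r.
Qed.

End Restriction.

Arguments restrict {C m d} e t.

Theorem lemma2 (R : realType) (m : nat) (d : 'I_m -> nat)
    (S : seq (vec R[i] d)) :
  UPB S ->
  ~ exists (e : 'I_m -> nat) (T : seq (vec R[i] (ext_dim d e))),
      [/\ forall t, t \in T -> product_state t,
          pairwise_orth T,
          (forall t s, t \in T -> s \in S -> orth (embed e s) t) &
          orth_basis (map (embed e) S ++ T)].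
Proof.
move=> [[_ [_ [v v_notin_S]]] S_unext] [e [T [T_prod _ T_orth [_ [_ spanning]]]]].
have T_restrict0 t : t \in T -> restrict e t = 0.
  move=> tT; case: (restrict_product_state (T_prod t tT)) => // t_prod.
  case: (S_unext _ t_prod) => s sS.
  by rewrite /orth -inner_embed; exact: T_orth.
apply/v_notin_S/(@in_span_cat0 _ _ _ _ (map (restrict e) T)).
  by move=> _ /mapP[t tT ->]; exact: T_restrict0.
have := restrict_in_span (spanning (embed e v)).
by rewrite embedK map_cat -map_comp (eq_map (@embedK _ _ _ e)) map_id.
Qed.
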